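(* Let $x_0,y_0$ be positive integers and let $\{(X_t,Y_t)\}_{t\ge 0}$ be the CA competition process with fitness ratio $r=1$ started at $(x_0,y_0)$. Let $N=\sum_{t=0}^\infty \mathbf{1}\{X_t=Y_t\}$ be the total number of ties. Then, as $n\to\infty$, \[ \mathbb{P}[N\ge n]\sim \frac{1}{2^{x_0+y_0-2}\,B(x_0,y_0)}\, n^{-1}, \] where $B(x,y)=\int_0^1 s^{x-1}(1-s)^{y-1}\,ds$ is the beta function.
   Context: The CA competition process with fitness ratio $r\ge 1$ started at $(x_0,y_0)$ is the discrete-time Markov chain $\{(X_t,Y_t)\}_{t\ge0}$ on $\{(x,y)\in\mathbb{Z}^2: x\ge1,y\ge1\}$ with $(X_0,Y_0)=(x_0,y_0)$ and transition probabilities: from $(x,y)$ it moves to $(x+1,y)$ with probability $\frac{rx}{rx+y}$ and to $(x,y+1)$ with probability $\frac{y}{rx+y}$. The notation $f(n)\sim g(n)$ means $\lim_{n\to\infty} f(n)/g(n)=1$. *)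

From Stdlib Require Import Reals Lra Lia.
From Coquelicot Require Import Coquelicot.
Open Scope R_scope.

Definition tie (x y : nat) : nat := if Nat.eqb x y then 1%nat else 0%nat.

(* ties_ge_prob r T x y k = P[ #{ t in 0..T : X_t = Y_t } >= k ] for the CA
   competition process with fitness ratio r started at (x,y). *)
Fixpoint ties_ge_prob (r : R) (T x y k : nat) : R :=
  match T with
  | O => if (k <=? tie x y)%nat then 1 else 0
  | S T' =>
      let k' := (k - tie x y)%nat in
      let px := r * INR x / (r * INR x + INR y) in
      let py := INR y / (r * INR x + INR y) in
      px * ties_ge_prob r T' (S x) y k' + py * ties_ge_prob r T' x (S y) k'
  end.

(* P[N >= n] where N = total number of ties over all times t >= 0:
   by continuity from below of the probability measure, it is the limit as
   T -> oo of the (nondecreasing) finite-horizon probabilities. *)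
Definition prob_N_ge (r : R) (x0 y0 n : nat) : R :=
  real (Lim_seq (fun T => ties_ge_prob r T x0 y0 n)).

Definition Beta (a b : nat) : R :=
  RInt (fun s => s ^ (a - 1) * (1 - s) ^ (b - 1)) 0 1.

From Stdlib Require Import Reals Lra Lia ZArith.
From Coquelicot Require Import Coquelicot.
Open Scope R_scope.

(* Conditionally on its limiting proportion [s ~ Beta(x0, y0)] (de Finetti),
   the urn moves [X - Y] as a random walk stepping [+1] with probability [s].
   Started at [d = x0 - y0], that walk is at [0] at least [k + 1] times with
   probability [hit(s, d) q(s)^k], where [q(s) = 1 - |2s - 1|] is its return
   probability; hence [B(x0, y0) P[N >= k + 1]] is the integral over [s] of
   [s^(x0-1) (1-s)^(y0-1) hit(s, d) q(s)^k].  As [q] maps each half of [[0, 1]]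
   affinely onto [[0, 1]], the density [(k + 1) q^k] concentrates at [s = 1/2],
   where [hit = 1], so the integral is [~ 2^(2-x0-y0) / (k + 1)].
   As [P[N >= n]] is a limit over finite horizons, the finite-horizon visit
   probabilities are squeezed between the supersolution [hit q^k] and a
   subsolution cut off outside a strip [(-M, M)], from which the walk escapes
   geometrically fast. *)

Definition cont (f : R -> R) : Prop := forall x, continuous f x.

Lemma cont_const c : cont (fun _ => c).
Proof. intro x; apply continuous_const. Qed.

Lemma cont_id : cont (fun x => x).
Proof. intro x; apply continuous_id. Qed.

Lemma cont_plus f g : cont f -> cont g -> cont (fun x => f x + g x).
Proof. intros Hf Hg x; apply (continuous_plus f g); auto. Qed.

Lemma cont_minus f g : cont f -> cont g -> cont (fun x => f x - g x).
Proof. intros Hf Hg x; apply (continuous_minus f g); auto. Qed.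

Lemma cont_mult f g : cont f -> cont g -> cont (fun x => f x * g x).
Proof. intros Hf Hg x; apply (continuous_mult f g); auto. Qed.

Lemma cont_pow f n : cont f -> cont (fun x => f x ^ n).
Proof. intro Hf; induction n as [|n IH]; [exact (cont_const 1) | now apply cont_mult]. Qed.

Lemma cont_abs f : cont f -> cont (fun x => Rabs (f x)).
Proof. intros Hf x; apply continuous_Rabs_comp, Hf. Qed.

Lemma cont_comp f g : cont f -> cont g -> cont (fun x => f (g x)).
Proof. intros Hf Hg x; apply continuous_comp; auto. Qed.

#[local] Hint Resolve cont_const cont_id cont_plus cont_minus cont_mult cont_pow cont_abs : cont.

Ltac solve_cont := solve [auto 20 with cont].

Lemma ex_RInt_cont f a b : cont f -> ex_RInt f a b.
Proof. intro Hf; apply (ex_RInt_continuous (V := R_CompleteNormedModule)); auto. Qed.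

Lemma pow_le1 x n : 0 <= x <= 1 -> x ^ n <= 1.
Proof. intro Hx; rewrite <- (pow1 n); apply pow_incr; lra. Qed.

Lemma pow_ge_bernoulli a m : 0 <= a -> 1 + INR m * (a - 1) <= a ^ m.
Proof.
  intro Ha; induction m as [|m IH]; [simpl; lra|].
  rewrite S_INR, <- tech_pow_Rmult. pose proof (pos_INR m).
  assert (a * (1 + INR m * (a - 1)) <= a * a ^ m) by (apply Rmult_le_compat_l; lra).
  assert (0 <= INR m * ((a - 1) * (a - 1))) by (apply Rmult_le_pos; [lra | apply Rle_0_sqr]).
  nra.
Qed.

Lemma Rabs_mult_sub_le x y u v : Rabs x <= 1 -> Rabs v <= 1 ->
  Rabs (x * y - u * v) <= Rabs (x - u) + Rabs (y - v).
Proof.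
  intros Hx Hv. replace (x * y - u * v) with (x * (y - v) + v * (x - u)) by ring.
  eapply Rle_trans; [apply Rabs_triang|]. rewrite !Rabs_mult.
  pose proof (Rabs_pos (y - v)); pose proof (Rabs_pos (x - u)).
  assert (Rabs x * Rabs (y - v) <= Rabs (y - v)) by nra.
  assert (Rabs v * Rabs (x - u) <= Rabs (x - u)) by nra.
  lra.
Qed.

Lemma pow_lipschitz x y n : 0 <= x <= 1 -> 0 <= y <= 1 -> Rabs (x ^ n - y ^ n) <= INR n * Rabs (x - y).
Proof.
  intros Hx Hy; induction n as [|n IH].
  - rewrite Rminus_diag, Rabs_R0; simpl; lra.
  - rewrite S_INR, <- !tech_pow_Rmult.
    eapply Rle_trans; [apply Rabs_mult_sub_le|].
    + rewrite Rabs_right; lra.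
    + rewrite Rabs_right; [apply pow_le1 | apply Rle_ge, pow_le]; lra.
    + lra.
Qed.

Lemma Lim_seq_incr_bounded (u : nat -> R) c : (forall n, u n <= u (S n)) -> (forall n, u n <= c) ->
  is_lim_seq u (real (Lim_seq u)).
Proof.
  intros Hinc Hc. pose proof (Lim_seq_correct u (ex_lim_seq_incr u Hinc)) as Hl.
  destruct (Lim_seq u) as [l| |]; [exact Hl|exfalso..].
  - exact (is_lim_seq_le u (fun _ => c) p_infty c Hc Hl (is_lim_seq_const c)).
  - assert (H0 : forall n, u 0%nat <= u n) by (induction n; [lra | specialize (Hinc n); lra]).
    exact (is_lim_seq_le (fun _ => u 0%nat) u (u 0%nat) m_infty H0 (is_lim_seq_const _) Hl).
Qed.

Lemma le_of_geom_defect a b c th : Rabs th < 1 -> (forall j, a - th ^ j * c <= b) -> a <= b.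
Proof.
  intros Hth Hj.
  assert (Hlim : is_lim_seq (fun j => a - th ^ j * c) (a - 0 * c)).
  { apply is_lim_seq_minus'; [apply is_lim_seq_const|].
    apply is_lim_seq_mult'; [apply is_lim_seq_geom, Hth | apply is_lim_seq_const]. }
  pose proof (is_lim_seq_le _ (fun _ => b) _ b Hj Hlim (is_lim_seq_const b)) as H; simpl in H. lra.
Qed.

Lemma le_of_eventually_scaled a b (c : nat -> R) : is_lim_seq c 1 ->
  eventually (fun M => c M * a <= b) -> a <= b.
Proof.
  intros Hc Hev.
  assert (Hlim : is_lim_seq (fun M => c M * a) (1 * a))
    by (apply is_lim_seq_mult'; [exact Hc | apply is_lim_seq_const]).
  pose proof (is_lim_seq_le_loc _ (fun _ => b) _ b Hev Hlim (is_lim_seq_const b)) as H; simpl in H. lra.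
Qed.

Lemma is_lim_seq_pow (u : nat -> R) (l : R) m : is_lim_seq u l -> is_lim_seq (fun n => u n ^ m) (l ^ m).
Proof.
  intro H; induction m as [|m IH]; [apply is_lim_seq_const|].
  exact (is_lim_seq_mult' u (fun n => u n ^ m) l (l ^ m) H IH).
Qed.

Lemma is_lim_seq_inv_INR : is_lim_seq (fun n => / INR n) 0.
Proof. exact (is_lim_seq_inv _ _ is_lim_seq_INR ltac:(discriminate)). Qed.

Lemma is_lim_seq_inv_succ : is_lim_seq (fun n => / (INR n + 1)) 0.
Proof.
  apply is_lim_seq_ext with (fun n => / INR (S n)); [intro; now rewrite S_INR|].
  apply (is_lim_seq_incr_1 (fun n => / INR n)), is_lim_seq_inv_INR.
Qed.

(* Equations between [RInt]s live in the carrier of [R_CompleteNormedModule];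
   [ring], [field] and [lra] only recognise them once restated over [R]. *)
Ltac as_real_eq := lazymatch goal with |- ?A = ?B => change (@eq R A B) end.

Lemma RInt_mult_r f c a b : ex_RInt f a b -> RInt (fun s => f s * c) a b = RInt f a b * c.
Proof.
  intro H. rewrite (RInt_ext (V := R_CompleteNormedModule) _ (fun s => scal c (f s))).
  - rewrite (RInt_scal (V := R_CompleteNormedModule)) by exact H. apply Rmult_comm.
  - intros; apply Rmult_comm.
Qed.

Lemma RInt_add f g a b : ex_RInt f a b -> ex_RInt g a b ->
  RInt (fun s => f s + g s) a b = RInt f a b + RInt g a b.
Proof. exact (RInt_plus (V := R_CompleteNormedModule) f g a b). Qed.

Lemma RInt_sub f g a b : ex_RInt f a b -> ex_RInt g a b ->
  RInt (fun s => f s - g s) a b = RInt f a b - RInt g a b.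
Proof. exact (RInt_minus (V := R_CompleteNormedModule) f g a b). Qed.

Lemma RInt_derive_eq (F f : R -> R) a b : a <= b ->
  (forall x, a <= x <= b -> is_derive F x (f x)) -> cont f -> RInt f a b = F b - F a.
Proof.
  intros Hab HF Hf.
  apply (is_RInt_unique (V := R_CompleteNormedModule)), (is_RInt_derive (V := R_CompleteNormedModule)).
  - intros x Hx; rewrite Rmin_left, Rmax_right in Hx by lra; auto.
  - intros; apply Hf.
Qed.

Lemma RInt_comp_affine g u v a b : cont g -> u <> 0 ->
  RInt (fun y => g (u * y + v)) a b = / u * RInt g (u * a + v) (u * b + v).
Proof.
  intros Hg Hu. rewrite <- (RInt_comp_lin (V := R_CompleteNormedModule)) by now apply ex_RInt_cont.
  rewrite <- (RInt_scal (V := R_CompleteNormedModule)).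
  - apply (RInt_ext (V := R_CompleteNormedModule)); intros.
    unfold scal; simpl; unfold mult; simpl. now field.
  - apply ex_RInt_cont, (cont_mult (fun _ => u)), cont_comp; solve_cont.
Qed.

Lemma RInt_pow_01 n : RInt (fun t => t ^ n) 0 1 = / (INR n + 1).
Proof.
  apply (is_RInt_unique (V := R_CompleteNormedModule)).
  replace (/ (INR n + 1)) with (1 ^ S n / INR (S n) - 0 ^ S n / INR (S n)); [apply is_RInt_pow|].
  rewrite pow1, pow_i, S_INR by lia. field. pose proof (pos_INR n); lra.
Qed.

(** * Visits to 0 of a walk with drift *)

Definition at_zero (d : Z) : nat := if Z.eqb d 0 then 1%nat else 0%nat.

Fixpoint walk_visits_ge (s : R) (T : nat) (d : Z) (k : nat) : R :=
  match T with
  | O => if (k <=? at_zero d)%nat then 1 else 0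
  | S T' => s * walk_visits_ge s T' (d + 1) (k - at_zero d)
            + (1 - s) * walk_visits_ge s T' (d - 1) (k - at_zero d)
  end.

Lemma cont_walk_visits_ge T d k : cont (fun s => walk_visits_ge s T d k).
Proof. revert d k; induction T as [|T IH]; intros d k; simpl; solve_cont. Qed.

#[local] Hint Resolve cont_walk_visits_ge : cont.

(* Reaching [0] has weight [a d]; each further return has weight [q]. *)
Definition visit_weight (a : Z -> R) (q : R) (d : Z) (k : nat) : R :=
  match k with O => 1 | S k => a d * q ^ k end.

Fixpoint strip_stay (s : R) (M T : nat) (d : Z) : R :=
  if Z_lt_dec (Z.abs d) (Z.of_nat M) then
    match T with
    | O => 1
    | S T' => s * strip_stay s M T' (d + 1) + (1 - s) * strip_stay s M T' (d - 1)
    end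
  else 0.

Section Walk.
Variable s : R.
Hypothesis Hs : 0 <= s <= 1.

Lemma walk_visits_ge_S T d k : walk_visits_ge s (S T) d k =
  s * walk_visits_ge s T (d + 1) (k - at_zero d) + (1 - s) * walk_visits_ge s T (d - 1) (k - at_zero d).
Proof. reflexivity. Qed.

Lemma walk_visits_ge_0 T d : walk_visits_ge s T d 0 = 1.
Proof. revert d; induction T as [|T IH]; intro d; simpl; [|rewrite !IH]; ring. Qed.

Lemma walk_visits_ge_bounds T d k : 0 <= walk_visits_ge s T d k <= 1.
Proof.
  revert d k; induction T as [|T IH]; intros d k; simpl.
  - destruct (k <=? at_zero d)%nat; lra.
  - pose proof (IH (d + 1)%Z (k - at_zero d)%nat); pose proof (IH (d - 1)%Z (k - at_zero d)%nat); nra.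
Qed.

Lemma walk_visits_ge_mono T d k : walk_visits_ge s T d k <= walk_visits_ge s (S T) d k.
Proof.
  revert d k; induction T as [|T IH]; intros d k.
  - simpl. destruct (Nat.leb_spec k (at_zero d)) as [Hk|Hk].
    + replace (k - at_zero d)%nat with 0%nat by lia. simpl; lra.
    + pose proof (walk_visits_ge_bounds 1 d k) as H; simpl in H; lra.
  - rewrite (walk_visits_ge_S (S T)), walk_visits_ge_S.
    pose proof (IH (d + 1)%Z (k - at_zero d)%nat); pose proof (IH (d - 1)%Z (k - at_zero d)%nat); nra.
Qed.

Section Supersolution.
Variables (a : Z -> R) (q : R).
Hypothesis a_ge0 : forall d, 0 <= a d.
Hypothesis a0_ge1 : 1 <= a 0%Z.
Hypothesis q_ge0 : 0 <= q.
Hypothesis a_superharmonic : forall d, d <> 0%Z -> s * a (d + 1)%Z + (1 - s) * a (d - 1)%Z <= a d.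
Hypothesis a_return_le : s * a 1%Z + (1 - s) * a (-1)%Z <= q.

Lemma visit_weight_superharmonic d k :
  s * visit_weight a q (d + 1) (k - at_zero d) + (1 - s) * visit_weight a q (d - 1) (k - at_zero d)
  <= visit_weight a q d k.
Proof.
  destruct k as [|k]; [simpl; lra|].
  unfold at_zero; destruct (Z.eqb_spec d 0) as [->|Hd].
  - replace (S k - 1)%nat with k by lia.
    destruct k as [|k]; cbn [visit_weight]; [rewrite pow_O; lra|].
    pose proof (pow_le q k q_ge0).
    assert ((s * a 1%Z + (1 - s) * a (-1)%Z) * q ^ k <= q * q ^ k) by (apply Rmult_le_compat_r; lra).
    assert (q * q ^ k <= a 0%Z * (q * q ^ k)) by (pose proof (pow_le q (S k) q_ge0); simpl in *; nra).
    simpl; nra.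
  - replace (S k - 0)%nat with (S k) by lia. cbn [visit_weight].
    pose proof (a_superharmonic d Hd); pose proof (pow_le q k q_ge0); nra.
Qed.

Lemma walk_visits_ge_le_weight T d k : walk_visits_ge s T d k <= visit_weight a q d k.
Proof.
  revert d k; induction T as [|T IH]; intros d k.
  - destruct k as [|k]; cbn [walk_visits_ge visit_weight]; [destruct (0 <=? at_zero d)%nat; lra|].
    destruct (Nat.leb_spec (S k) (at_zero d)) as [Hk|Hk].
    + unfold at_zero in Hk; destruct (Z.eqb_spec d 0) as [->|]; [|lia].
      replace k with 0%nat by lia; rewrite pow_O; lra.
    + apply Rmult_le_pos; [apply a_ge0 | apply pow_le, q_ge0].
  - rewrite walk_visits_ge_S. eapply Rle_trans; [|apply visit_weight_superharmonic].
    apply Rplus_le_compat; apply Rmult_le_compat_l; auto; lra.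
Qed.

End Supersolution.

Lemma strip_stay_bounds M T d : 0 <= strip_stay s M T d <= 1.
Proof.
  revert d; induction T as [|T IH]; intro d; simpl;
    destruct (Z_lt_dec (Z.abs d) (Z.of_nat M)); try lra.
  pose proof (IH (d + 1)%Z); pose proof (IH (d - 1)%Z); nra.
Qed.

Lemma strip_stay_out M T d : (Z.of_nat M <= Z.abs d)%Z -> strip_stay s M T d = 0.
Proof. intro H; destruct T; simpl; destruct (Z_lt_dec (Z.abs d) (Z.of_nat M)); lia || reflexivity. Qed.

Lemma strip_stay_S_in M T d : (Z.abs d < Z.of_nat M)%Z ->
  strip_stay s M (S T) d = s * strip_stay s M T (d + 1) + (1 - s) * strip_stay s M T (d - 1).
Proof. intro H; simpl; destruct (Z_lt_dec (Z.abs d) (Z.of_nat M)); [reflexivity | lia]. Qed.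

Lemma strip_stay_markov M T c :
  (forall e, strip_stay s M T e <= c) ->
  forall m d, strip_stay s M (T + m) d <= c * strip_stay s M m d.
Proof.
  intros Hc m; induction m as [|m IH]; intro d;
    (destruct (Z_lt_dec (Z.abs d) (Z.of_nat M)); [|rewrite !strip_stay_out by lia; lra]).
  - rewrite Nat.add_0_r. simpl strip_stay at 2.
    destruct (Z_lt_dec (Z.abs d) (Z.of_nat M)); [rewrite Rmult_1_r; auto | lia].
  - rewrite Nat.add_succ_r, !strip_stay_S_in by assumption.
    pose proof (IH (d + 1)%Z); pose proof (IH (d - 1)%Z); nra.
Qed.

Section Subsolution.
Variables (M : nat) (a : Z -> R) (q : R).
Hypothesis a_bounds : forall d, 0 <= a d <= 1.
Hypothesis a_out : forall d, (Z.of_nat M <= Z.abs d)%Z -> a d = 0.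
Hypothesis q_bounds : 0 <= q <= 1.
Hypothesis a_subharmonic : forall d, d <> 0%Z -> (Z.abs d < Z.of_nat M)%Z ->
  a d <= s * a (d + 1)%Z + (1 - s) * a (d - 1)%Z.
Hypothesis a_return_ge : q <= s * a 1%Z + (1 - s) * a (-1)%Z.

Lemma visit_weight_subharmonic d k : (Z.abs d < Z.of_nat M)%Z ->
  visit_weight a q d k
  <= s * visit_weight a q (d + 1) (k - at_zero d) + (1 - s) * visit_weight a q (d - 1) (k - at_zero d).
Proof.
  intro Hin. destruct k as [|k]; [simpl; lra|].
  unfold at_zero; destruct (Z.eqb_spec d 0) as [->|Hd].
  - replace (S k - 1)%nat with k by lia. pose proof (a_bounds 0%Z).
    destruct k as [|k]; cbn [visit_weight]; [rewrite pow_O; lra|].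
    pose proof (pow_le q k (proj1 q_bounds)).
    assert (0 <= q * q ^ k) by (apply Rmult_le_pos; lra).
    assert (a 0%Z * (q * q ^ k) <= q * q ^ k) by nra.
    assert (q * q ^ k <= (s * a 1%Z + (1 - s) * a (-1)%Z) * q ^ k) by (apply Rmult_le_compat_r; lra).
    simpl; nra.
  - replace (S k - 0)%nat with (S k) by lia. cbn [visit_weight].
    pose proof (a_subharmonic d Hd Hin); pose proof (pow_le q k (proj1 q_bounds)); nra.
Qed.

(* Against a subharmonic weight vanishing off the strip, the only loss is the
   mass of the walks still inside the strip at time [T]. *)
Lemma weight_le_walk_visits_ge T d k :
  visit_weight a q d k - strip_stay s M T d <= walk_visits_ge s T d k.
Proof.
  assert (Hout : forall T d k, (Z.of_nat M <= Z.abs d)%Z ->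
            visit_weight a q d k - strip_stay s M T d <= walk_visits_ge s T d k).
  { intros T' d' k' H. rewrite strip_stay_out by exact H. pose proof (walk_visits_ge_bounds T' d' k').
    destruct k' as [|k']; cbn [visit_weight]; [rewrite walk_visits_ge_0 | rewrite a_out by exact H]; lra. }
  revert d k; induction T as [|T IH]; intros d k;
    (destruct (Z_lt_dec (Z.abs d) (Z.of_nat M)) as [Hin|Hin]; [|apply Hout; lia]).
  - pose proof (walk_visits_ge_bounds 0 d k).
    simpl strip_stay; destruct (Z_lt_dec (Z.abs d) (Z.of_nat M)); [|lia].
    destruct k as [|k]; cbn [visit_weight]; [rewrite walk_visits_ge_0; lra|].
    pose proof (a_bounds d); pose proof (pow_le q k (proj1 q_bounds)); pose proof (pow_le1 q k q_bounds).
    nra.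
  - rewrite walk_visits_ge_S, strip_stay_S_in by exact Hin.
    pose proof (visit_weight_subharmonic d k Hin).
    pose proof (IH (d + 1)%Z (k - at_zero d)%nat); pose proof (IH (d - 1)%Z (k - at_zero d)%nat).
    nra.
Qed.

End Subsolution.

End Walk.

Lemma strip_stay_opp s M T d : strip_stay (1 - s) M T (- d) = strip_stay s M T d.
Proof.
  revert d; induction T as [|T IH]; intro d; simpl; rewrite Z.abs_opp; auto.
  destruct (Z_lt_dec (Z.abs d) (Z.of_nat M)); auto.
  replace (- d + 1)%Z with (- (d - 1))%Z by lia.
  replace (- d - 1)%Z with (- (d + 1))%Z by lia.
  rewrite !IH; ring.
Qed.

(* [m] consecutive up-steps, of probability [s ^ m], take the walk out. *)
Lemma strip_stay_exit s M m d : 0 <= s <= 1 -> (Z.of_nat M <= d + Z.of_nat m)%Z ->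
  strip_stay s M m d <= 1 - s ^ m.
Proof.
  intro Hs; revert d; induction m as [|m IH]; intros d Hd.
  - rewrite strip_stay_out by lia; simpl; lra.
  - pose proof (pow_le1 s (S m) Hs). simpl strip_stay; simpl pow in *.
    destruct (Z_lt_dec (Z.abs d) (Z.of_nat M)); [|lra].
    pose proof (IH (d + 1)%Z ltac:(lia)); pose proof (strip_stay_bounds s Hs M m (d - 1)%Z); nra.
Qed.

Lemma strip_stay_2M s M d : 0 <= s <= 1 -> strip_stay s M (2 * M) d <= 1 - (1/2) ^ (2 * M).
Proof.
  intro Hs. destruct (Z_lt_dec (Z.abs d) (Z.of_nat M)).
  - destruct (Rle_dec (1/2) s).
    + pose proof (strip_stay_exit s M (2 * M) d Hs ltac:(lia)).
      pose proof (pow_incr (1/2) s (2 * M) ltac:(lra)); lra.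
    + rewrite <- strip_stay_opp.
      pose proof (strip_stay_exit (1 - s) M (2 * M) (- d) ltac:(lra) ltac:(lia)).
      pose proof (pow_incr (1/2) (1 - s) (2 * M) ltac:(lra)); lra.
  - rewrite strip_stay_out by lia. pose proof (pow_le1 (1/2) (2 * M) ltac:(lra)); lra.
Qed.

Lemma strip_stay_geom s M j d : 0 <= s <= 1 ->
  strip_stay s M (2 * M * j) d <= (1 - (1/2) ^ (2 * M)) ^ j.
Proof.
  intro Hs; revert d; induction j as [|j IH]; intro d.
  - rewrite Nat.mul_0_r, pow_O. apply (strip_stay_bounds s Hs).
  - replace (2 * M * S j)%nat with (2 * M * j + 2 * M)%nat by lia.
    pose proof (strip_stay_markov s Hs M _ _ IH (2 * M) d).
    pose proof (strip_stay_2M s M d Hs).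
    pose proof (pow_le (1 - (1/2) ^ (2 * M)) j ltac:(pose proof (pow_le1 (1/2) (2 * M)); lra)).
    rewrite <- tech_pow_Rmult. nra.
Qed.

(** * Hitting and return probabilities *)

(* Gambler's ruin: from height [m], with up-step probability [s], the walk
   reaches [0] surely if [s <= 1/2] and with probability [((1-s)/s)^m] otherwise. *)
Definition hit_down (s : R) (m : nat) : R :=
  if Rle_dec s (1/2) then 1 else ((1 - s) / s) ^ m.

Definition hit_prob (s : R) (d : Z) : R :=
  if Z_lt_dec d 0 then hit_down (1 - s) (Z.abs_nat d) else hit_down s (Z.abs_nat d).

Definition return_prob (s : R) : R := 1 - 2 * Rabs (s - 1/2).

Lemma hit_down_bounds s m : 0 <= s <= 1 -> 0 <= hit_down s m <= 1.
Proof.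
  intro Hs; unfold hit_down; destruct (Rle_dec s (1/2)); [lra|].
  assert (0 <= (1 - s) / s <= 1).
  { split; [apply Rle_mult_inv_pos | apply (Rdiv_le_1 (1 - s) s)]; lra. }
  split; [apply pow_le | apply pow_le1]; lra.
Qed.

Lemma hit_down_0 s : hit_down s 0 = 1.
Proof. unfold hit_down; destruct (Rle_dec s (1/2)); reflexivity. Qed.

Lemma hit_down_harmonic s m : 0 <= s <= 1 ->
  s * hit_down s (S (S m)) + (1 - s) * hit_down s m = hit_down s (S m).
Proof. intro Hs; unfold hit_down; destruct (Rle_dec s (1/2)); [ring|simpl; field; lra]. Qed.

Lemma hit_prob_bounds s d : 0 <= s <= 1 -> 0 <= hit_prob s d <= 1.
Proof. intro Hs; unfold hit_prob; destruct (Z_lt_dec d 0); apply hit_down_bounds; lra. Qed.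

Lemma hit_prob_0 s : hit_prob s 0 = 1.
Proof. apply hit_down_0. Qed.

Lemma hit_prob_of_nat s m : hit_prob s (Z.of_nat m) = hit_down s m.
Proof. unfold hit_prob; destruct (Z_lt_dec (Z.of_nat m) 0); [lia|]. now rewrite Zabs2Nat.id. Qed.

Lemma hit_prob_opp s d : hit_prob (1 - s) (- d) = hit_prob s d.
Proof.
  unfold hit_prob; replace (Z.abs_nat (- d)) with (Z.abs_nat d) by lia.
  destruct (Z_lt_dec (- d) 0), (Z_lt_dec d 0); try lia.
  - now replace (1 - (1 - s)) with s by ring.
  - reflexivity.
  - replace d with 0%Z by lia. now rewrite !hit_down_0.
Qed.

Lemma reflect_step (P : R -> Z -> Prop) :
  (forall s d, 0 <= s <= 1 -> (0 < d)%Z -> P s d) ->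
  (forall s d, P (1 - s) (- d)%Z -> P s d) ->
  forall s d, 0 <= s <= 1 -> d <> 0%Z -> P s d.
Proof.
  intros Hpos Hrefl s d Hs Hd. destruct (Z_lt_dec 0 d); [auto|].
  apply Hrefl, Hpos; lra || lia.
Qed.

Lemma hit_prob_harmonic s d : 0 <= s <= 1 -> d <> 0%Z ->
  s * hit_prob s (d + 1) + (1 - s) * hit_prob s (d - 1) = hit_prob s d.
Proof.
  revert s d; apply reflect_step.
  - intros s d Hs Hd. destruct (Z_of_nat_complete_inf (d - 1)) as [m Hm]; [lia|].
    replace (d + 1)%Z with (Z.of_nat (S (S m))) by lia.
    replace (d - 1)%Z with (Z.of_nat m) by lia.
    replace d with (Z.of_nat (S m)) by lia.
    rewrite !hit_prob_of_nat; apply hit_down_harmonic, Hs.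
  - intros s d H.
    rewrite <- (hit_prob_opp s (d + 1)), <- (hit_prob_opp s (d - 1)), <- (hit_prob_opp s d).
    replace (- (d + 1))%Z with (- d - 1)%Z by lia.
    replace (- (d - 1))%Z with (- d + 1)%Z by lia.
    rewrite <- H; ring.
Qed.

Lemma hit_prob_first_step s : 0 <= s <= 1 ->
  s * hit_prob s 1 + (1 - s) * hit_prob s (-1) = return_prob s.
Proof.
  intro Hs. rewrite <- (hit_prob_opp s (-1)).
  change (hit_prob s 1) with (hit_down s 1); change (hit_prob (1 - s) (- -1)) with (hit_down (1 - s) 1).
  unfold hit_down, return_prob.
  destruct (Rle_dec s (1/2)), (Rle_dec (1 - s) (1/2)).
  - replace s with (1/2) by lra. rewrite Rminus_diag, Rabs_R0; lra.
  - rewrite Rabs_left1 by lra; simpl; field; lra.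
  - rewrite Rabs_right by lra; simpl; field; lra.
  - lra.
Qed.

Lemma return_prob_bounds s : 0 <= s <= 1 -> 0 <= return_prob s <= 1.
Proof.
  intro Hs; unfold return_prob.
  destruct (Rle_dec s (1/2)); [rewrite Rabs_left1 | rewrite Rabs_right]; lra.
Qed.

Lemma cont_return_prob : cont return_prob.
Proof. unfold return_prob; solve_cont. Qed.

#[local] Hint Resolve cont_return_prob : cont.

Lemma hit_down_ge s m : 0 <= s <= 1 -> 1 - 4 * INR m * Rabs (s - 1/2) <= hit_down s m.
Proof.
  intro Hs; unfold hit_down; pose proof (pos_INR m).
  destruct (Rle_dec s (1/2)); [pose proof (Rabs_pos (s - 1/2)); nra|].
  rewrite Rabs_right by lra.
  pose proof (pow_ge_bernoulli ((1 - s) / s) m ltac:(apply Rle_mult_inv_pos; lra)).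
  assert (- (4 * (s - 1/2)) <= (1 - s) / s - 1).
  { replace ((1 - s) / s - 1) with ((1 - 2 * s) / s) by (field; lra).
    apply Rmult_le_reg_r with s; [lra|]. unfold Rdiv; rewrite Rmult_assoc, Rinv_l by lra. nra. }
  assert (INR m * (- (4 * (s - 1/2))) <= INR m * ((1 - s) / s - 1)) by (apply Rmult_le_compat_l; lra).
  lra.
Qed.

Lemma hit_prob_ge s d : 0 <= s <= 1 -> 1 - 4 * IZR (Z.abs d) * Rabs (s - 1/2) <= hit_prob s d.
Proof.
  intro Hs. rewrite <- Nat2Z.inj_abs_nat, <- INR_IZR_INZ. unfold hit_prob.
  destruct (Z_lt_dec d 0); [|apply hit_down_ge, Hs].
  replace (Rabs (s - 1/2)) with (Rabs ((1 - s) - 1/2)) by (rewrite <- Rabs_Ropp; f_equal; field).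
  apply hit_down_ge; lra.
Qed.

Lemma walk_visits_ge_le_hit s T d k : 0 <= s <= 1 ->
  walk_visits_ge s T d (S k) <= hit_prob s d * return_prob s ^ k.
Proof.
  intro Hs. apply (walk_visits_ge_le_weight s Hs (hit_prob s) (return_prob s)).
  - intro; apply hit_prob_bounds, Hs.
  - rewrite hit_prob_0; lra.
  - apply return_prob_bounds, Hs.
  - intros e He; apply Req_le, hit_prob_harmonic; assumption.
  - apply Req_le, hit_prob_first_step, Hs.
Qed.

(* Cutting [hit_prob] down linearly to [0] at [|d| = M] keeps it subharmonic. *)
Definition strip_weight (s : R) (M : nat) (d : Z) : R :=
  if Z_lt_dec (Z.abs d) (Z.of_nat M) then hit_prob s d * (1 - IZR (Z.abs d) / INR M) else 0.

Lemma strip_weight_eq s M d : (1 <= M)%nat -> (Z.abs d <= Z.of_nat M)%Z ->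
  strip_weight s M d = hit_prob s d * (1 - IZR (Z.abs d) / INR M).
Proof.
  intros HM H; unfold strip_weight; destruct (Z_lt_dec (Z.abs d) (Z.of_nat M)); [reflexivity|].
  assert (Z.abs d = Z.of_nat M) as -> by lia. rewrite <- INR_IZR_INZ.
  pose proof (lt_0_INR M ltac:(lia)). field_simplify; lra.
Qed.

Lemma strip_weight_bounds s M d : 0 <= s <= 1 -> 0 <= strip_weight s M d <= 1.
Proof.
  intro Hs; unfold strip_weight; destruct (Z_lt_dec (Z.abs d) (Z.of_nat M)); [|lra].
  pose proof (hit_prob_bounds s d Hs). pose proof (lt_0_INR M ltac:(lia)).
  assert (0 <= IZR (Z.abs d) / INR M <= 1).
  { split; [apply Rle_mult_inv_pos; [apply IZR_le; lia | lra]|].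
    apply Rmult_le_reg_r with (INR M); [lra|]. unfold Rdiv; rewrite Rmult_assoc, Rinv_l by lra.
    rewrite Rmult_1_r, Rmult_1_l, INR_IZR_INZ. apply IZR_le; lia. }
  nra.
Qed.

Lemma strip_weight_opp s M d : strip_weight (1 - s) M (- d) = strip_weight s M d.
Proof. unfold strip_weight; now rewrite Z.abs_opp, hit_prob_opp. Qed.

(* For [s > 1/2] the defect of [hit_down] times the linear cut-off is
   [((1-s)/s)^(m+1) (2s-1)/M >= 0]; for [s <= 1/2] it is [(1-2s)/M >= 0]. *)
Lemma hit_down_cutoff_subharmonic s M m : 0 <= s <= 1 -> 0 < M ->
  hit_down s (S m) * (1 - (INR m + 1) / M) <=
  s * (hit_down s (S (S m)) * (1 - (INR m + 2) / M)) + (1 - s) * (hit_down s m * (1 - INR m / M)).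
Proof.
  intros Hs HM. unfold hit_down. destruct (Rle_dec s (1/2)).
  - assert (0 <= (1 - 2 * s) / M) by (apply Rle_mult_inv_pos; lra).
    replace (s * (1 * (1 - (INR m + 2) / M)) + (1 - s) * (1 * (1 - INR m / M)))
      with (1 * (1 - (INR m + 1) / M) + (1 - 2 * s) / M) by (field; lra). lra.
  - set (r := (1 - s) / s).
    assert (Hr : 0 <= r) by (apply Rle_mult_inv_pos; lra).
    assert (0 <= r ^ m * r * (2 * s - 1) / M).
    { apply Rle_mult_inv_pos; [|lra]. apply Rmult_le_pos; [apply Rmult_le_pos; [apply pow_le|]|]; lra. }
    replace (s * (r ^ S (S m) * (1 - (INR m + 2) / M)) + (1 - s) * (r ^ m * (1 - INR m / M)))
      with (r ^ S m * (1 - (INR m + 1) / M) + r ^ m * r * (2 * s - 1) / M)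
      by (simpl; unfold r; field; lra).
    lra.
Qed.

Lemma strip_weight_subharmonic s M d : 0 <= s <= 1 -> d <> 0%Z -> (Z.abs d < Z.of_nat M)%Z ->
  strip_weight s M d <= s * strip_weight s M (d + 1) + (1 - s) * strip_weight s M (d - 1).
Proof.
  intros Hs Hd HdM; revert s d Hs Hd HdM.
  apply (reflect_step (fun s d => (Z.abs d < Z.of_nat M)%Z ->
    strip_weight s M d <= s * strip_weight s M (d + 1) + (1 - s) * strip_weight s M (d - 1))).
  - intros s d Hs Hd HdM. rewrite !strip_weight_eq by lia.
    destruct (Z_of_nat_complete_inf (d - 1)) as [m Hm]; [lia|].
    replace (d + 1)%Z with (Z.of_nat (S (S m))) by lia.
    replace (d - 1)%Z with (Z.of_nat m) by lia.
    replace d with (Z.of_nat (S m)) by lia.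
    rewrite !hit_prob_of_nat, !Z.abs_eq by lia. rewrite <- !INR_IZR_INZ, !S_INR.
    replace (INR m + 1 + 1) with (INR m + 2) by ring.
    apply hit_down_cutoff_subharmonic; [exact Hs | apply lt_0_INR; lia].
  - intros s d H HdM. rewrite Z.abs_opp in H. specialize (H HdM).
    rewrite <- (strip_weight_opp s M (d + 1)), <- (strip_weight_opp s M (d - 1)),
      <- (strip_weight_opp s M d).
    replace (- (d + 1))%Z with (- d - 1)%Z by lia.
    replace (- (d - 1))%Z with (- d + 1)%Z by lia.
    replace (1 - (1 - s)) with s in H by ring. lra.
Qed.

Definition cutoff_factor (D : R) (M m : nat) : R := (1 - D / INR M) * (1 - 1 / INR M) ^ m.

Lemma cutoff_factor_nonneg D M m : (1 <= M)%nat -> 0 <= D <= INR M -> 0 <= cutoff_factor D M m.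
Proof.
  intros HM HD. assert (1 <= INR M) by (apply (le_INR 1); lia).
  pose proof (proj1 (Rdiv_le_1 D (INR M) ltac:(lra)) (proj2 HD)).
  pose proof (proj1 (Rdiv_le_1 1 (INR M) ltac:(lra)) H).
  apply Rmult_le_pos; [|apply pow_le]; lra.
Qed.

Lemma is_lim_seq_cutoff_factor (D : R) m : is_lim_seq (fun M => cutoff_factor D M m) 1.
Proof.
  assert (H : forall a, is_lim_seq (fun M => 1 - a / INR M) 1).
  { intro a.
    pose proof (is_lim_seq_minus' _ _ 1 (a * 0) (is_lim_seq_const 1)
                  (is_lim_seq_mult' _ _ a 0 (is_lim_seq_const a) is_lim_seq_inv_INR)) as H.
    rewrite Rmult_0_r, Rminus_0_r in H. exact H. }
  pose proof (is_lim_seq_mult' _ _ 1 (1 ^ m) (H D) (is_lim_seq_pow _ 1 m (H 1))) as Hm.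
  rewrite pow1, Rmult_1_l in Hm. exact Hm.
Qed.

Lemma walk_visits_ge_ge_hit s M T d k : 0 <= s <= 1 -> (Z.abs d < Z.of_nat M)%Z ->
  cutoff_factor (IZR (Z.abs d)) M k * (hit_prob s d * return_prob s ^ k) - strip_stay s M T d
  <= walk_visits_ge s T d (S k).
Proof.
  intros Hs HdM.
  replace (cutoff_factor (IZR (Z.abs d)) M k * (hit_prob s d * return_prob s ^ k))
    with (strip_weight s M d * ((1 - 1 / INR M) * return_prob s) ^ k)
    by (unfold cutoff_factor; rewrite strip_weight_eq, Rpow_mult_distr by lia; ring).
  assert (HM : 1 <= INR M) by (apply (le_INR 1); lia).
  pose proof (return_prob_bounds s Hs).
  assert (0 <= 1 / INR M <= 1).
  { split; [apply Rle_mult_inv_pos | apply (Rdiv_le_1 1 (INR M))]; lra. }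
  refine (weight_le_walk_visits_ge s Hs M (strip_weight s M) _ _ _ _ _ _ T d (S k)).
  - intro; apply strip_weight_bounds, Hs.
  - intros e He; unfold strip_weight; destruct (Z_lt_dec (Z.abs e) (Z.of_nat M)); lia || reflexivity.
  - split; [apply Rmult_le_pos | rewrite <- (Rmult_1_l 1); apply Rmult_le_compat]; lra.
  - intros e He HeM; apply strip_weight_subharmonic; assumption.
  - rewrite !strip_weight_eq by lia. simpl Z.abs.
    rewrite <- hit_prob_first_step by exact Hs. apply Req_le; ring.
Qed.

Lemma walk_visits_ge_ge s M j d m : 0 <= s <= 1 -> (Z.abs d < Z.of_nat M)%Z ->
  cutoff_factor (IZR (Z.abs d)) M m * ((1 - 4 * IZR (Z.abs d) * Rabs (s - 1/2)) * return_prob s ^ m)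
  - (1 - (1/2) ^ (2 * M)) ^ j <= walk_visits_ge s (2 * M * j) d (S m).
Proof.
  intros Hs HdM.
  pose proof (walk_visits_ge_ge_hit s M (2 * M * j) d m Hs HdM).
  pose proof (strip_stay_geom s M j d Hs).
  pose proof (hit_prob_ge s d Hs).
  pose proof (pow_le (return_prob s) m (proj1 (return_prob_bounds s Hs))).
  assert (0 <= cutoff_factor (IZR (Z.abs d)) M m).
  { apply cutoff_factor_nonneg; [lia|]. rewrite INR_IZR_INZ; split; apply IZR_le; lia. }
  assert ((1 - 4 * IZR (Z.abs d) * Rabs (s - 1/2)) * return_prob s ^ m
          <= hit_prob s d * return_prob s ^ m) by (apply Rmult_le_compat_r; assumption).
  nra.
Qed.

(** * Moments of the return probability *)

(* [return_prob] maps each half of [[0, 1]] affinely onto [[0, 1]], so it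
   transports the uniform distribution to itself. *)
Lemma RInt_comp_return_prob g : cont g -> RInt (fun s => g (return_prob s)) 0 1 = RInt g 0 1.
Proof.
  intro Hg.
  assert (Hgq : cont (fun s => g (return_prob s))) by (apply cont_comp; solve_cont).
  rewrite <- (RInt_Chasles (V := R_CompleteNormedModule) _ 0 (1/2) 1) by now apply ex_RInt_cont.
  rewrite (RInt_ext (V := R_CompleteNormedModule) _ (fun s => g (2 * s + 0)) 0 (1/2)).
  2: { intros x Hx; rewrite Rmin_left, Rmax_right in Hx by lra. unfold return_prob.
       rewrite Rabs_left by lra. now replace (1 - 2 * - (x - 1/2)) with (2 * x + 0) by field. }
  rewrite (RInt_ext (V := R_CompleteNormedModule) _ (fun s => g (-2 * s + 2)) (1/2) 1).
  2: { intros x Hx; rewrite Rmin_left, Rmax_right in Hx by lra. unfold return_prob.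
       rewrite Rabs_right by lra. now replace (1 - 2 * (x - 1/2)) with (-2 * x + 2) by field. }
  rewrite !RInt_comp_affine by (assumption || lra).
  replace (2 * 0 + 0) with 0 by ring. replace (2 * (1/2) + 0) with 1 by field.
  replace (-2 * (1/2) + 2) with 1 by field. replace (-2 * 1 + 2) with 0 by ring.
  rewrite <- (opp_RInt_swap (V := R_CompleteNormedModule) g 0 1) by now apply ex_RInt_cont.
  unfold plus, opp; simpl. field.
Qed.

Lemma RInt_return_prob_pow n : RInt (fun s => return_prob s ^ n) 0 1 = / (INR n + 1).
Proof. rewrite (RInt_comp_return_prob (fun t => t ^ n)) by solve_cont. apply RInt_pow_01. Qed.

Lemma RInt_dist_half_return_prob_pow n :
  RInt (fun s => Rabs (s - 1/2) * return_prob s ^ n) 0 1 = / (2 * (INR n + 1) * (INR n + 2)).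
Proof.
  pose proof (pos_INR n).
  rewrite (RInt_ext (V := R_CompleteNormedModule) _
             (fun s => (fun t => (t ^ n - t ^ S n) * / 2) (return_prob s))).
  2: { intros x _; unfold return_prob. simpl. field. }
  rewrite (RInt_comp_return_prob (fun t => (t ^ n - t ^ S n) * / 2)) by solve_cont.
  rewrite RInt_mult_r, RInt_sub, !RInt_pow_01 by (apply ex_RInt_cont; solve_cont).
  rewrite S_INR. as_real_eq; field. lra.
Qed.

Definition moment (g : R -> R) (n : nat) : R := RInt (fun s => g s * return_prob s ^ n) 0 1.

Lemma moment_const c n : (INR n + 1) * moment (fun _ => c) n = c.
Proof.
  unfold moment. rewrite (RInt_ext (V := R_CompleteNormedModule) _ (fun s => return_prob s ^ n * c))
    by (intros; apply Rmult_comm).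
  rewrite RInt_mult_r, RInt_return_prob_pow by (apply ex_RInt_cont; solve_cont).
  field. pose proof (pos_INR n); lra.
Qed.

Lemma Rabs_moment_le h L n : cont h ->
  (forall s, 0 < s < 1 -> Rabs (h s) <= L * Rabs (s - 1/2)) ->
  Rabs (moment h n) <= L / (2 * (INR n + 1) * (INR n + 2)).
Proof.
  intros Hh HL. unfold moment.
  eapply Rle_trans; [apply abs_RInt_le; [lra | apply ex_RInt_cont; solve_cont]|].
  unfold Rdiv; rewrite <- RInt_dist_half_return_prob_pow, Rmult_comm, <- RInt_mult_r
    by (apply ex_RInt_cont; solve_cont).
  apply RInt_le; [lra | apply ex_RInt_cont; solve_cont ..|].
  intros s Hs. pose proof (pow_le (return_prob s) n (proj1 (return_prob_bounds s ltac:(lra)))).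
  rewrite Rabs_mult, (Rabs_right (return_prob s ^ n)) by lra.
  pose proof (HL s Hs). nra.
Qed.

(* [(n + 1) return_prob^n] concentrates at [1/2]: a Lipschitz-at-[1/2]
   deviation contributes [O(1/n)]. *)
Lemma moment_asymptotic g L : cont g ->
  (forall s, 0 < s < 1 -> Rabs (g s - g (1/2)) <= L * Rabs (s - 1/2)) ->
  is_lim_seq (fun n => (INR n + 1) * moment g n) (g (1/2)).
Proof.
  intros Hg HL.
  assert (HL0 : 0 <= L).
  { pose proof (HL (1/4) ltac:(lra)) as H. pose proof (Rabs_pos (g (1/4) - g (1/2))).
    rewrite (Rabs_left (1/4 - 1/2)) in H by lra. lra. }
  set (h := fun s => g s - g (1/2)).
  assert (Hsplit : forall n, (INR n + 1) * moment g n = g (1/2) + (INR n + 1) * moment h n).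
  { intro n. rewrite <- (moment_const (g (1/2)) n), <- Rmult_plus_distr_l. f_equal.
    unfold moment, h. rewrite <- RInt_add by (apply ex_RInt_cont; solve_cont).
    apply (RInt_ext (V := R_CompleteNormedModule)); intros; as_real_eq; ring. }
  assert (Hh : is_lim_seq (fun n => (INR n + 1) * moment h n) 0).
  { apply is_lim_seq_abs_0.
    apply is_lim_seq_le_le with (u := fun _ => 0) (w := fun n => L * / (INR n + 1)).
    - intro n. split; [apply Rabs_pos|]. pose proof (pos_INR n).
      rewrite Rabs_mult, Rabs_right by lra.
      pose proof (Rabs_moment_le h L n ltac:(unfold h; solve_cont) HL).
      assert (L / (2 * (INR n + 1) * (INR n + 2)) * (INR n + 1) <= L * / (INR n + 1)).
      { replace (L / (2 * (INR n + 1) * (INR n + 2)) * (INR n + 1)) with (L * / (2 * (INR n + 2)))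
          by (field; lra).
        apply Rmult_le_compat_l; [lra|]. apply Rinv_le_contravar; lra. }
      nra.
    - apply is_lim_seq_const.
    - replace (Finite 0) with (Rbar_mult L 0) by (simpl; f_equal; ring).
      apply is_lim_seq_scal_l, is_lim_seq_inv_succ. }
  apply is_lim_seq_ext with (fun n => g (1/2) + (INR n + 1) * moment h n); [intro; now rewrite Hsplit|].
  replace (Finite (g (1/2))) with (Rbar_plus (g (1/2)) 0) by (simpl; f_equal; ring).
  apply is_lim_seq_plus'; [apply is_lim_seq_const | exact Hh].
Qed.

(** * The beta function *)

Definition beta_kernel (x y : nat) (s : R) : R := s ^ (x - 1) * (1 - s) ^ (y - 1).

Lemma cont_beta_kernel x y : cont (beta_kernel x y).
Proof. unfold beta_kernel; solve_cont. Qed.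

#[local] Hint Resolve cont_beta_kernel : cont.

Lemma beta_kernel_bounds x y s : 0 <= s <= 1 -> 0 <= beta_kernel x y s <= 1.
Proof.
  intro Hs; unfold beta_kernel.
  pose proof (pow_le s (x - 1) (proj1 Hs)); pose proof (pow_le1 s (x - 1) Hs).
  pose proof (pow_le (1 - s) (y - 1) ltac:(lra)); pose proof (pow_le1 (1 - s) (y - 1) ltac:(lra)).
  nra.
Qed.

Lemma beta_kernel_lipschitz x y s t : 0 <= s <= 1 -> 0 <= t <= 1 ->
  Rabs (beta_kernel x y s - beta_kernel x y t) <= INR ((x - 1) + (y - 1)) * Rabs (s - t).
Proof.
  intros Hs Ht; unfold beta_kernel.
  eapply Rle_trans; [apply Rabs_mult_sub_le|].
  - rewrite Rabs_right; [apply pow_le1 | apply Rle_ge, pow_le]; lra.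
  - rewrite Rabs_right; [apply pow_le1 | apply Rle_ge, pow_le]; lra.
  - rewrite plus_INR, Rmult_plus_distr_r.
    pose proof (pow_lipschitz s t (x - 1) Hs Ht).
    pose proof (pow_lipschitz (1 - s) (1 - t) (y - 1) ltac:(lra) ltac:(lra)).
    replace (1 - s - (1 - t)) with (- (s - t)) in H0 by ring. rewrite Rabs_Ropp in H0. lra.
Qed.

Lemma beta_kernel_half x y : (1 <= x)%nat -> (1 <= y)%nat ->
  2 ^ (x + y - 2) * beta_kernel x y (1/2) = 1.
Proof.
  intros Hx Hy. unfold beta_kernel.
  replace (x + y - 2)%nat with ((x - 1) + (y - 1))%nat by lia.
  replace (1 - 1/2) with (1/2) by field.
  replace (2 ^ ((x - 1) + (y - 1)) * ((1/2) ^ (x - 1) * (1/2) ^ (y - 1)))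
    with ((2 * (1/2)) ^ (x - 1) * (2 * (1/2)) ^ (y - 1)) by (rewrite pow_add, !Rpow_mult_distr; ring).
  replace (2 * (1/2)) with 1 by field. rewrite !pow1; ring.
Qed.

Lemma Beta_pos x y : 0 < Beta x y.
Proof.
  apply RInt_gt_0; [lra| |intros; apply cont_beta_kernel].
  intros s Hs; apply Rmult_lt_0_compat; apply pow_lt; lra.
Qed.

Lemma Beta_by_parts a b : INR (S a) * Beta (S a) (S (S b)) = INR (S b) * Beta (S (S a)) (S b).
Proof.
  unfold Beta; simpl Nat.sub; rewrite !Nat.sub_0_r.
  rewrite !(Rmult_comm (INR _)), <- !RInt_mult_r by (apply ex_RInt_cont; solve_cont).
  apply Rminus_diag_uniq. rewrite <- RInt_sub by (apply ex_RInt_cont; solve_cont).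
  rewrite (RInt_derive_eq (fun s => s ^ S a * (1 - s) ^ S b)); [simpl; ring|lra| |solve_cont].
  intros s _. auto_derive; [easy|].
  (* [auto_derive] leaves [INR (S a)] unfolded. *)
  change (match a with 0%nat => 1 | S _ => INR a + 1 end) with (INR (S a)).
  change (match b with 0%nat => 1 | S _ => INR b + 1 end) with (INR (S b)).
  replace (1 + - s) with (1 - s) by ring. simpl; as_real_eq; ring.
Qed.

Lemma Beta_split a b : Beta (S a) (S b) = Beta (S (S a)) (S b) + Beta (S a) (S (S b)).
Proof.
  unfold Beta; simpl Nat.sub; rewrite !Nat.sub_0_r.
  rewrite <- RInt_add by (apply ex_RInt_cont; solve_cont).
  apply (RInt_ext (V := R_CompleteNormedModule)); intros; simpl; as_real_eq; ring.
Qed.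

Lemma Rdiv_mult_mix x y u v : 0 < x + y -> x * v = y * u -> x / (x + y) * (u + v) = u.
Proof.
  intros Hxy Hvu. replace (x / (x + y) * (u + v)) with ((x * u + x * v) / (x + y)) by (field; lra).
  rewrite Hvu. field. lra.
Qed.

Lemma Beta_succ_l a b :
  INR (S a) / (INR (S a) + INR (S b)) * Beta (S a) (S b) = Beta (S (S a)) (S b).
Proof.
  rewrite Beta_split at 1. apply Rdiv_mult_mix; [|apply Beta_by_parts].
  apply Rplus_lt_0_compat; apply lt_0_INR; lia.
Qed.

Lemma Beta_succ_r a b :
  INR (S b) / (INR (S a) + INR (S b)) * Beta (S a) (S b) = Beta (S a) (S (S b)).
Proof.
  rewrite Beta_split at 1. rewrite (Rplus_comm (Beta _ _)), (Rplus_comm (INR (S a))).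
  apply Rdiv_mult_mix; [|symmetry; apply Beta_by_parts].
  apply Rplus_lt_0_compat; apply lt_0_INR; lia.
Qed.

(** * The Polya urn *)

Lemma tie_at_zero x y : tie x y = at_zero (Z.of_nat x - Z.of_nat y).
Proof.
  unfold tie, at_zero; destruct (Nat.eqb_spec x y), (Z.eqb_spec (Z.of_nat x - Z.of_nat y) 0); lia.
Qed.

(* De Finetti for the Polya urn: started at [(x, y)], the urn is the mixture
   over [s ~ Beta(x, y)] of walks of [X - Y] with up-step probability [s]. *)
Lemma ties_ge_prob_mixture T x y k : (1 <= x)%nat -> (1 <= y)%nat ->
  ties_ge_prob 1 T x y k * Beta x y =
  RInt (fun s => beta_kernel x y s * walk_visits_ge s T (Z.of_nat x - Z.of_nat y) k) 0 1.
Proof.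
  revert x y k; induction T as [|T IH]; intros x y k Hx Hy.
  - simpl. rewrite RInt_mult_r, tie_at_zero by (apply ex_RInt_cont; solve_cont). apply Rmult_comm.
  - destruct x as [|a]; [lia|]. destruct y as [|b]; [lia|].
    cbn [ties_ge_prob].
    rewrite !Rmult_1_l, Rmult_plus_distr_r, !Rmult_assoc, !(Rmult_comm (ties_ge_prob _ _ _ _ _)).
    rewrite <- !Rmult_assoc, Beta_succ_l, Beta_succ_r, !(Rmult_comm (Beta _ _)), !IH by lia.
    rewrite <- RInt_add by (apply ex_RInt_cont; solve_cont).
    apply (RInt_ext (V := R_CompleteNormedModule)); intros s _.
    replace (Z.of_nat (S (S a)) - Z.of_nat (S b))%Z
      with ((Z.of_nat (S a) - Z.of_nat (S b)) + 1)%Z by lia.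
    replace (Z.of_nat (S a) - Z.of_nat (S (S b)))%Z
      with ((Z.of_nat (S a) - Z.of_nat (S b)) - 1)%Z by lia.
    rewrite tie_at_zero. cbn [walk_visits_ge]. unfold beta_kernel.
    replace (S (S a) - 1)%nat with (S a) by lia. replace (S (S b) - 1)%nat with (S b) by lia.
    replace (S a - 1)%nat with a by lia. replace (S b - 1)%nat with b by lia.
    simpl pow; as_real_eq; ring.
Qed.

Section Urn.
Variables x0 y0 : nat.
Hypothesis hx : (1 <= x0)%nat.
Hypothesis hy : (1 <= y0)%nat.

Let d : Z := Z.of_nat x0 - Z.of_nat y0.
Let D : R := IZR (Z.abs d).

(* [beta_kernel] times the lower bound [hit_prob_ge] on the hitting probability. *)
Definition lower_kernel (s : R) : R := beta_kernel x0 y0 s * (1 - 4 * D * Rabs (s - 1/2)).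

Lemma cont_lower_kernel : cont lower_kernel.
Proof. unfold lower_kernel; solve_cont. Qed.

#[local] Hint Resolve cont_lower_kernel : cont.

Lemma ties_ge_prob_mono T k : ties_ge_prob 1 T x0 y0 k <= ties_ge_prob 1 (S T) x0 y0 k.
Proof.
  apply Rmult_le_reg_r with (Beta x0 y0); [apply Beta_pos|].
  rewrite !ties_ge_prob_mixture by assumption.
  apply RInt_le; [lra | apply ex_RInt_cont; solve_cont ..|].
  intros s Hs. apply Rmult_le_compat_l; [apply beta_kernel_bounds; lra|].
  apply walk_visits_ge_mono; lra.
Qed.

Lemma ties_ge_prob_le_moment T m :
  ties_ge_prob 1 T x0 y0 (S m) * Beta x0 y0 <= moment (beta_kernel x0 y0) m.
Proof.
  rewrite ties_ge_prob_mixture by assumption.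
  apply RInt_le; [lra | apply ex_RInt_cont; solve_cont ..|].
  intros s Hs; fold d. apply Rmult_le_compat_l; [apply beta_kernel_bounds; lra|].
  eapply Rle_trans; [apply walk_visits_ge_le_hit; lra|].
  pose proof (hit_prob_bounds s d ltac:(lra)).
  pose proof (pow_le (return_prob s) m (proj1 (return_prob_bounds s ltac:(lra)))). nra.
Qed.

Lemma ties_ge_prob_ge_moment m M j : (Z.abs d < Z.of_nat M)%Z ->
  cutoff_factor D M m * moment lower_kernel m - (1 - (1/2) ^ (2 * M)) ^ j * Beta x0 y0
  <= ties_ge_prob 1 (2 * M * j) x0 y0 (S m) * Beta x0 y0.
Proof.
  intro HdM. rewrite ties_ge_prob_mixture by assumption.
  unfold moment; change (Beta x0 y0) with (RInt (beta_kernel x0 y0) 0 1).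
  rewrite (Rmult_comm (cutoff_factor _ _ _)), (Rmult_comm (_ ^ j)), <- !RInt_mult_r, <- RInt_sub
    by (apply ex_RInt_cont; solve_cont).
  apply RInt_le; [lra | apply ex_RInt_cont; solve_cont ..|].
  intros s Hs; fold d. unfold lower_kernel.
  pose proof (walk_visits_ge_ge s M j d m ltac:(lra) HdM) as Hwalk; fold D in Hwalk.
  pose proof (beta_kernel_bounds x0 y0 s ltac:(lra)).
  set (f := beta_kernel x0 y0 s) in *; set (c := cutoff_factor D M m) in *.
  set (th := (1 - (1/2) ^ (2 * M)) ^ j) in *.
  set (w := (1 - 4 * D * Rabs (s - 1/2)) * return_prob s ^ m) in *.
  replace (f * (1 - 4 * D * Rabs (s - 1/2)) * return_prob s ^ m * c - f * th)
    with (f * (c * w - th)) by (unfold w; ring).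
  apply Rmult_le_compat_l; lra.
Qed.

Lemma prob_N_ge_bounds m :
  moment lower_kernel m <= prob_N_ge 1 x0 y0 (S m) * Beta x0 y0 <= moment (beta_kernel x0 y0) m.
Proof.
  set (u := fun T => ties_ge_prob 1 T x0 y0 (S m)).
  pose proof (Beta_pos x0 y0) as HB.
  assert (Hinc : forall T, u T <= u (S T)) by (intro; apply ties_ge_prob_mono).
  assert (Hup : forall T, u T <= moment (beta_kernel x0 y0) m / Beta x0 y0).
  { intro T. apply Rmult_le_reg_r with (Beta x0 y0); [exact HB|].
    unfold Rdiv; rewrite Rmult_assoc, Rinv_l, Rmult_1_r by lra. apply ties_ge_prob_le_moment. }
  pose proof (Lim_seq_incr_bounded u _ Hinc Hup) as Hl.
  change (prob_N_ge 1 x0 y0 (S m)) with (real (Lim_seq u)).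
  set (l := real (Lim_seq u)) in *.
  split.
  - apply (le_of_eventually_scaled _ _ _ (is_lim_seq_cutoff_factor D m)).
    exists (S (Z.abs_nat d)); intros M HM.
    apply (le_of_geom_defect _ _ (Beta x0 y0) (1 - (1/2) ^ (2 * M))).
    + pose proof (pow_lt (1/2) (2 * M) ltac:(lra)); pose proof (pow_le1 (1/2) (2 * M) ltac:(lra)).
      rewrite Rabs_right; lra.
    + intro j. eapply Rle_trans; [apply ties_ge_prob_ge_moment; lia|].
      apply Rmult_le_compat_r; [lra|]. exact (is_lim_seq_incr_compare u l Hl Hinc _).
  - pose proof (is_lim_seq_le u _ l _ Hup Hl (is_lim_seq_const _)) as H; simpl in H.
    apply Rmult_le_reg_r with (/ Beta x0 y0); [apply Rinv_0_lt_compat, HB|].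
    rewrite Rmult_assoc, Rinv_r, Rmult_1_r by lra. exact H.
Qed.

Lemma lower_kernel_lipschitz s : 0 <= s <= 1 ->
  Rabs (lower_kernel s - lower_kernel (1/2)) <= (INR ((x0 - 1) + (y0 - 1)) + 4 * D) * Rabs (s - 1/2).
Proof.
  intro Hs. unfold lower_kernel. rewrite Rminus_diag, Rabs_R0, Rmult_0_r, Rminus_0_r, Rmult_1_r.
  pose proof (beta_kernel_lipschitz x0 y0 s (1/2) Hs ltac:(lra)).
  pose proof (beta_kernel_bounds x0 y0 s Hs). pose proof (Rabs_pos (s - 1/2)).
  assert (0 <= D) by (apply IZR_le; lia).
  replace (beta_kernel x0 y0 s * (1 - 4 * D * Rabs (s - 1/2)) - beta_kernel x0 y0 (1/2))
    with ((beta_kernel x0 y0 s - beta_kernel x0 y0 (1/2))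
          + - (4 * D * Rabs (s - 1/2) * beta_kernel x0 y0 s)) by ring.
  eapply Rle_trans; [apply Rabs_triang|].
  rewrite Rabs_Ropp, (Rabs_right (4 * D * Rabs (s - 1/2) * beta_kernel x0 y0 s)).
  - assert (4 * D * Rabs (s - 1/2) * beta_kernel x0 y0 s <= 4 * D * Rabs (s - 1/2))
      by (rewrite <- (Rmult_1_r (4 * D * Rabs _)) at 2; apply Rmult_le_compat_l; nra).
    lra.
  - apply Rle_ge, Rmult_le_pos; nra.
Qed.

Lemma is_lim_seq_prob_N_ge :
  is_lim_seq (fun m => (INR m + 1) * (prob_N_ge 1 x0 y0 (S m) * Beta x0 y0)) (beta_kernel x0 y0 (1/2)).
Proof.
  set (L := INR ((x0 - 1) + (y0 - 1))).
  apply is_lim_seq_le_le with (u := fun m => (INR m + 1) * moment lower_kernel m)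
                              (w := fun m => (INR m + 1) * moment (beta_kernel x0 y0) m).
  - intro m. pose proof (prob_N_ge_bounds m); pose proof (pos_INR m).
    split; apply Rmult_le_compat_l; lra.
  - replace (beta_kernel x0 y0 (1/2)) with (lower_kernel (1/2))
      by (unfold lower_kernel; rewrite Rminus_diag, Rabs_R0; ring).
    apply (moment_asymptotic _ (L + 4 * D) cont_lower_kernel).
    intros; apply lower_kernel_lipschitz; lra.
  - apply (moment_asymptotic _ L (cont_beta_kernel x0 y0)).
    intros; apply beta_kernel_lipschitz; lra.
Qed.

End Urn.

Theorem theorem3 (x0 y0 : nat) (hx : (1 <= x0)%nat) (hy : (1 <= y0)%nat) :
  is_lim_seq
    (fun n : nat =>
       prob_N_ge 1 x0 y0 n /
       ((1 / (2 ^ (x0 + y0 - 2) * Beta x0 y0)) * / INR n))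
    1.
Proof.
  apply is_lim_seq_incr_1.
  pose proof (Beta_pos x0 y0) as HB.
  pose proof (pow_lt 2 (x0 + y0 - 2) ltac:(lra)) as HK.
  pose proof (is_lim_seq_scal_l _ (2 ^ (x0 + y0 - 2)) _ (is_lim_seq_prob_N_ge x0 y0 hx hy)) as H.
  simpl in H; rewrite beta_kernel_half in H by assumption.
  apply is_lim_seq_ext with (2 := H). intro m. rewrite S_INR.
  pose proof (pos_INR m). field. lra.
Qed.
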